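(* Let $\mathbb{X}=\ell_4^2$. For $((x,y),(x_1,y_1))\in S_{\mathbb{X}}\times S_{\mathbb{X}}$, the pair $((x,y),(x_1,y_1))$ is not a CPP if and only if $xy=0$ and $x_1y_1\neq0$.
   Context: $\ell_4^2$ is $\mathbb{R}^2$ with norm $\|(a,b)\|=(a^4+b^4)^{1/4}$; $S_{\mathbb{X}}$ its unit sphere. $B(u,r)=\{v:\|v-u\|<r\}$. $u\perp_B v$ means $\|u+\lambda v\|\ge\|u\|$ for all real $\lambda$; $u^\perp=\{v:u\perp_Bv\}$. For $u,v\in S_{\mathbb{X}}$, $(u,v)$ is a CPP if there exist $r>0,\mu>0$ such that for all $z\in u^\perp\cap S_{\mathbb{X}}$, all $w\in v^\perp\cap S_{\mathbb{X}}$ and all $a,b\in\mathbb{R}$, $au+bz\in B(u,r)\cap S_{\mathbb{X}}$ implies $\|av+b\mu w\|\le1$. *)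

From Stdlib Require Import Reals.
Open Scope R_scope.

(* The space l_4^2 : R^2 with ||(a,b)|| = (a^4 + b^4)^(1/4),
   written as sqrt (sqrt (a^4 + b^4)) (valid since a^4+b^4 >= 0). *)
Definition vec := (R * R)%type.
Definition vadd (u v : vec) : vec := (fst u + fst v, snd u + snd v).
Definition vscal (c : R) (u : vec) : vec := (c * fst u, c * snd u).
Definition vsub (u v : vec) : vec := vadd u (vscal (-1) v).
Definition norm4 (u : vec) : R := sqrt (sqrt (fst u ^ 4 + snd u ^ 4)).

Definition in_sphere (u : vec) : Prop := norm4 u = 1.

Definition in_ball (u : vec) (r : R) (v : vec) : Prop := norm4 (vsub v u) < r.

Definition birkhoff (u v : vec) : Prop :=
  forall lam : R, norm4 (vadd u (vscal lam v)) >= norm4 u.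

Definition CPP (u v : vec) : Prop :=
  exists r : R, r > 0 /\ exists mu : R, mu > 0 /\
    forall (z w : vec) (a b : R),
      birkhoff u z -> in_sphere z ->
      birkhoff v w -> in_sphere w ->
      in_ball u r (vadd (vscal a u) (vscal b z)) ->
      in_sphere (vadd (vscal a u) (vscal b z)) ->
      norm4 (vadd (vscal a v) (vscal (b * mu) w)) <= 1.

From Stdlib Require Import Reals Lra.
Open Scope R_scope.

(* For unit vectors u, z with u ⊥_B z, which for this smooth norm means [bj_form u z = 0],
   expanding the fourth powers gives ‖a u + b z‖^4 = a^4 + b^2 Q_u(a, b) with the quadratic
   form Q_u = [tail_form u z] = 6 S a^2 + 4 T a b + b^2, where T^2 <= S by Cauchy–Schwarz.
   If u = (x, y) is off the axes, S >= x^2 y^2 gives Q_u(a, b) >= x^2 y^2 a^2 + b^2 / 5, while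
   Q_v(a, b) <= 8 a^2 + 3 b^2 for every unit v; hence for mu = x^2 y^2 / 4 we get
   ‖a v + mu b w‖ <= ‖a u + b z‖ for all a, b, and (u, v) is a CPP for any radius.
   On an axis S = T = 0, so Q_u(a, b) = b^2 and mu = 1 works when v is on an axis too.
   If u is on an axis but v = (x1, y1) is not, the points a u + b z with a^4 + b^4 = 1 and
   small b > 0 lie on the sphere near u, yet mu^2 Q_v(a, mu b) >= mu^2 x1^2 y1^2 a^2 > b^2,
   so ‖a v + mu b w‖ > 1 whatever mu is. *)

Definition quart (u : vec) : R := fst u ^ 4 + snd u ^ 4.
Definition bj_form (u z : vec) : R := fst u ^ 3 * fst z + snd u ^ 3 * snd z.
Definition mixed_sq (u z : vec) : R := fst u ^ 2 * fst z ^ 2 + snd u ^ 2 * snd z ^ 2.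
Definition tail_form (u z : vec) (a b : R) : R :=
  6 * mixed_sq u z * a ^ 2 + 4 * bj_form z u * a * b + quart z * b ^ 2.

Lemma pow4_le_iff s t : 0 <= s -> 0 <= t -> (s <= t <-> s ^ 4 <= t ^ 4).
Proof.
  intros Hs Ht; split; intro H.
  - apply pow_incr; lra.
  - destruct (Rle_lt_dec s t) as [|Hts]; [assumption|exfalso].
    assert (E : s ^ 4 - t ^ 4 = (s - t) * (s ^ 3 + s ^ 2 * t + s * t ^ 2 + t ^ 3)) by ring.
    assert (0 < s ^ 3) by (apply pow_lt; lra).
    assert (0 <= s ^ 2 * t + s * t ^ 2 + t ^ 3) by (simpl; nra).
    nra.
Qed.

Lemma pow4_lt_iff s t : 0 <= s -> 0 <= t -> (s < t <-> s ^ 4 < t ^ 4).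
Proof.
  intros Hs Ht. pose proof (pow4_le_iff t s Ht Hs).
  split; intro H'; apply Rnot_le_lt; intro; apply (Rlt_not_le _ _ H'); tauto.
Qed.

Lemma sqrt_sqrt_pow4 s : 0 <= s -> sqrt (sqrt s) ^ 4 = s.
Proof.
  intro Hs.
  replace (sqrt (sqrt s) ^ 4)
    with ((sqrt (sqrt s) * sqrt (sqrt s)) * (sqrt (sqrt s) * sqrt (sqrt s))) by ring.
  rewrite sqrt_sqrt by apply sqrt_pos. apply sqrt_sqrt, Hs.
Qed.

Lemma quart_nonneg u : 0 <= quart u.
Proof. destruct u as [p q]; unfold quart; simpl; nra. Qed.

Lemma norm4_pow4 u : norm4 u ^ 4 = quart u.
Proof. apply sqrt_sqrt_pow4, quart_nonneg. Qed.

Lemma norm4_le_iff u v : norm4 u <= norm4 v <-> quart u <= quart v.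
Proof.
  rewrite <- !norm4_pow4. apply pow4_le_iff; apply sqrt_pos.
Qed.

Lemma norm4_le1_iff u : norm4 u <= 1 <-> quart u <= 1.
Proof.
  rewrite <- norm4_pow4, (pow4_le_iff (norm4 u) 1), pow1; [reflexivity | apply sqrt_pos | lra].
Qed.

Lemma in_sphere_iff u : in_sphere u <-> quart u = 1.
Proof.
  unfold in_sphere. split; intro H.
  - rewrite <- norm4_pow4, H; ring.
  - apply Rle_antisym.
    + apply norm4_le1_iff; lra.
    + apply (pow4_le_iff 1 (norm4 u)); [lra | apply sqrt_pos |].
      rewrite pow1, norm4_pow4; lra.
Qed.

Lemma in_ball_iff u r p : 0 < r -> (in_ball u r p <-> quart (vsub p u) < r ^ 4).
Proof.
  intro Hr. unfold in_ball. rewrite <- norm4_pow4.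
  apply pow4_lt_iff; [apply sqrt_pos | lra].
Qed.

Lemma quart_lincomb u z a b :
  quart (vadd (vscal a u) (vscal b z))
  = a ^ 4 * quart u + 4 * a ^ 3 * b * bj_form u z + b ^ 2 * tail_form u z a b.
Proof.
  destruct u as [u1 u2], z as [z1 z2].
  unfold tail_form, quart, bj_form, mixed_sq, vadd, vscal; cbn [fst snd]; ring.
Qed.

Lemma tail_form_nonneg u z a b : 0 <= tail_form u z a b.
Proof.
  destruct u as [u1 u2], z as [z1 z2].
  unfold tail_form, quart, bj_form, mixed_sq; cbn [fst snd].
  replace (6 * (u1 ^ 2 * z1 ^ 2 + u2 ^ 2 * z2 ^ 2) * a ^ 2
           + 4 * (z1 ^ 3 * u1 + z2 ^ 3 * u2) * a * b + (z1 ^ 4 + z2 ^ 4) * b ^ 2)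
    with (z1 ^ 2 * ((2 * a * u1 + b * z1) ^ 2 + 2 * (a * u1) ^ 2)
          + z2 ^ 2 * ((2 * a * u2 + b * z2) ^ 2 + 2 * (a * u2) ^ 2)) by ring.
  pose proof (pow2_ge_0 (2 * a * u1 + b * z1)). pose proof (pow2_ge_0 (a * u1)).
  pose proof (pow2_ge_0 (2 * a * u2 + b * z2)). pose proof (pow2_ge_0 (a * u2)).
  apply Rplus_le_le_0_compat; apply Rmult_le_pos; (apply pow2_ge_0 || lra).
Qed.

Lemma first_order_coeff_zero (c K : R) (q : R -> R) :
  (forall l, Rabs l <= 1 -> q l <= K) ->
  (forall l, 0 <= c * l + l ^ 2 * q l) -> c = 0.
Proof.
  intros Hq Hnn. destruct (Req_dec c 0) as [|Hc]; [assumption | exfalso].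
  set (t := / (Rabs c + Rabs K + 1)).
  assert (Ht : 0 < t) by (unfold t; apply Rinv_0_lt_compat; pose proof (Rabs_pos c);
                          pose proof (Rabs_pos K); lra).
  assert (HtD : t * (Rabs c + Rabs K + 1) = 1)
    by (unfold t; field; pose proof (Rabs_pos c); pose proof (Rabs_pos K); lra).
  assert (Hl : Rabs (- c * t) <= 1).
  { rewrite Rabs_mult, Rabs_Ropp, (Rabs_pos_eq t) by lra. pose proof (Rabs_pos K). nra. }
  specialize (Hq _ Hl). specialize (Hnn (- c * t)).
  assert (Hc2 : 0 < c ^ 2) by (simpl; rewrite Rmult_1_r; apply Rsqr_pos_lt; assumption).
  assert (HK : q (- c * t) <= Rabs K) by (pose proof (Rle_abs K); lra).
  assert (HtK : t * Rabs K < 1) by (pose proof (Rabs_pos c); nra).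
  assert (c ^ 2 * t ^ 2 * q (- c * t) <= c ^ 2 * t ^ 2 * Rabs K)
    by (apply Rmult_le_compat_l; [nra | assumption]).
  assert (0 < c ^ 2 * t * (1 - t * Rabs K))
    by (apply Rmult_lt_0_compat; [apply Rmult_lt_0_compat|]; lra).
  replace (c * (- c * t) + (- c * t) ^ 2 * q (- c * t))
    with (- (c ^ 2 * t) + c ^ 2 * t ^ 2 * q (- c * t)) in Hnn by ring.
  nra.
Qed.

Lemma vscal_1 u : vscal 1 u = u.
Proof. destruct u; unfold vscal; cbn [fst snd]; now rewrite !Rmult_1_l. Qed.

Lemma birkhoff_iff u z : birkhoff u z <-> bj_form u z = 0.
Proof.
  assert (Hexp : forall l, quart (vadd u (vscal l z))
                   = quart u + 4 * bj_form u z * l + l ^ 2 * tail_form u z 1 l).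
  { intro l. rewrite <- (vscal_1 u) at 1. rewrite quart_lincomb. ring. }
  unfold birkhoff. split.
  - intro H.
    enough (4 * bj_form u z = 0) by lra.
    apply (first_order_coeff_zero _ (6 * mixed_sq u z + 4 * Rabs (bj_form z u) + quart z)
             (tail_form u z 1)).
    + intros l Hl. unfold tail_form.
      assert (bj_form z u * l <= Rabs (bj_form z u)).
      { eapply Rle_trans; [apply Rle_abs|]. rewrite Rabs_mult.
        pose proof (Rabs_pos (bj_form z u)). nra. }
      assert (l ^ 2 <= 1) by (rewrite <- pow2_abs; pose proof (Rabs_pos l); nra).
      pose proof (quart_nonneg z). nra.
    + intro l. specialize (H l). apply Rge_le, norm4_le_iff in H.
      rewrite Hexp in H. lra.
  - intros H l. apply Rle_ge, norm4_le_iff. rewrite Hexp, H.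
    pose proof (tail_form_nonneg u z 1 l). pose proof (pow2_ge_0 l). nra.
Qed.

Lemma mixed_sq_nonneg u z : 0 <= mixed_sq u z.
Proof. destruct u, z; unfold mixed_sq; cbn [fst snd]; nra. Qed.

Lemma mixed_sq_sq_le u z : mixed_sq u z ^ 2 <= quart u * quart z.
Proof.
  destruct u as [u1 u2], z as [z1 z2]; unfold mixed_sq, quart; cbn [fst snd].
  assert (E : (u1 ^ 4 + u2 ^ 4) * (z1 ^ 4 + z2 ^ 4) - (u1 ^ 2 * z1 ^ 2 + u2 ^ 2 * z2 ^ 2) ^ 2
              = (u1 ^ 2 * z2 ^ 2 - u2 ^ 2 * z1 ^ 2) ^ 2) by ring.
  pose proof (pow2_ge_0 (u1 ^ 2 * z2 ^ 2 - u2 ^ 2 * z1 ^ 2)). lra.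
Qed.

Lemma bj_form_sq_le u z : bj_form z u ^ 2 <= mixed_sq u z * quart z.
Proof.
  destruct u as [u1 u2], z as [z1 z2]; unfold bj_form, mixed_sq, quart; cbn [fst snd].
  assert (E : (u1 ^ 2 * z1 ^ 2 + u2 ^ 2 * z2 ^ 2) * (z1 ^ 4 + z2 ^ 4)
              - (z1 ^ 3 * u1 + z2 ^ 3 * u2) ^ 2
              = (u1 * z1 * z2 ^ 2 - u2 * z2 * z1 ^ 2) ^ 2) by ring.
  pose proof (pow2_ge_0 (u1 * z1 * z2 ^ 2 - u2 * z2 * z1 ^ 2)). lra.
Qed.

Lemma mixed_sq_le_1 u z : quart u = 1 -> quart z = 1 -> mixed_sq u z <= 1.
Proof.
  intros Hu Hz. pose proof (mixed_sq_sq_le u z) as H. rewrite Hu, Hz in H.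
  pose proof (mixed_sq_nonneg u z). nra.
Qed.

Lemma tail_form_ge u z a b :
  quart z = 1 -> mixed_sq u z * a ^ 2 + b ^ 2 / 5 <= tail_form u z a b.
Proof.
  intro Hz. unfold tail_form. rewrite Hz.
  pose proof (bj_form_sq_le u z) as HT. rewrite Hz, Rmult_1_r in HT.
  set (T := bj_form z u) in *. set (S := mixed_sq u z) in *.
  (* AM-GM: [0 <= (5 T a + 2 b)^2] bounds the cross term [4 T a b] *)
  pose proof (pow2_ge_0 (5 * T * a + 2 * b)).
  assert (T ^ 2 * a ^ 2 <= S * a ^ 2) by (apply Rmult_le_compat_r; [apply pow2_ge_0 | lra]).
  nra.
Qed.

Lemma tail_form_le u z a b :
  quart u = 1 -> quart z = 1 -> tail_form u z a b <= 8 * a ^ 2 + 3 * b ^ 2.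
Proof.
  intros Hu Hz. unfold tail_form. rewrite Hz.
  pose proof (mixed_sq_le_1 u z Hu Hz) as HS.
  pose proof (bj_form_sq_le u z) as HT. rewrite Hz, Rmult_1_r in HT.
  set (T := bj_form z u) in *. set (S := mixed_sq u z) in *.
  pose proof (pow2_ge_0 (T * a - b)).
  assert (T ^ 2 * a ^ 2 <= a ^ 2) by (pose proof (pow2_ge_0 a); nra).
  assert (S * a ^ 2 <= a ^ 2) by (pose proof (pow2_ge_0 a); nra).
  nra.
Qed.

Lemma axis_gap_le_mixed_sq u z :
  quart u = 1 -> quart z = 1 -> (fst u * snd u) ^ 2 <= mixed_sq u z.
Proof.
  destruct u as [x y], z as [z1 z2]; unfold quart, mixed_sq; cbn [fst snd]; intros Hu Hz.
  assert (Hx : x ^ 2 <= 1) by (pose proof (pow2_ge_0 y); nra).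
  assert (Hy : y ^ 2 <= 1) by (pose proof (pow2_ge_0 x); nra).
  assert (Hzz : 1 <= z1 ^ 2 + z2 ^ 2) by (pose proof (pow2_ge_0 z1); pose proof (pow2_ge_0 z2); nra).
  pose proof (pow2_ge_0 x). pose proof (pow2_ge_0 y).
  pose proof (pow2_ge_0 z1). pose proof (pow2_ge_0 z2).
  assert (x ^ 2 * y ^ 2 * z1 ^ 2 <= x ^ 2 * z1 ^ 2) by nra.
  assert (x ^ 2 * y ^ 2 * z2 ^ 2 <= y ^ 2 * z2 ^ 2) by nra.
  assert (0 <= x ^ 2 * y ^ 2) by nra.
  nra.
Qed.

Lemma tail_form_on_axis u z a b :
  quart u = 1 -> fst u * snd u = 0 -> bj_form u z = 0 -> tail_form u z a b = quart z * b ^ 2.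
Proof.
  destruct u as [x y], z as [z1 z2]; unfold tail_form, quart, bj_form, mixed_sq; cbn [fst snd].
  intros Hu Hxy Horth.
  destruct (Rmult_integral _ _ Hxy) as [-> | ->].
  - assert (Hy : y <> 0) by (intro; subst; simpl in Hu; lra).
    destruct (Rmult_integral (y ^ 3) z2) as [H3 | ->];
      [lra | exfalso; exact (pow_nonzero y 3 Hy H3) | ring].
  - assert (Hx : x <> 0) by (intro; subst; simpl in Hu; lra).
    destruct (Rmult_integral (x ^ 3) z1) as [H3 | ->];
      [lra | exfalso; exact (pow_nonzero x 3 Hx H3) | ring].
Qed.

Lemma exists_orth_unit v : quart v = 1 -> exists w, quart w = 1 /\ bj_form v w = 0.
Proof.
  destruct v as [x y]; unfold quart; cbn [fst snd]; intro Hv.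
  assert (HK : 0 < x ^ 12 + y ^ 12).
  { replace (x ^ 12 + y ^ 12) with ((x ^ 4) ^ 3 + (y ^ 4) ^ 3) by ring.
    assert (0 <= x ^ 4 /\ 0 <= y ^ 4) as [] by (split; apply pow_even_ge0 || nra).
    destruct (Rle_lt_dec (1 / 2) (x ^ 4)).
    - assert ((1 / 2) ^ 3 <= (x ^ 4) ^ 3) by (apply pow_incr; lra).
      pose proof (pow_le (y ^ 4) 3). lra.
    - assert ((1 / 2) ^ 3 <= (y ^ 4) ^ 3) by (apply pow_incr; lra).
      pose proof (pow_le (x ^ 4) 3). lra. }
  set (t := sqrt (sqrt (/ (x ^ 12 + y ^ 12)))).
  assert (Ht : t ^ 4 * (x ^ 12 + y ^ 12) = 1).
  { unfold t. rewrite sqrt_sqrt_pow4 by (apply Rlt_le, Rinv_0_lt_compat, HK). field; lra. }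
  exists (vscal t (- y ^ 3, x ^ 3)).
  unfold vscal, quart, bj_form; cbn [fst snd]. split.
  - rewrite <- Ht. ring.
  - ring.
Qed.

Lemma CPP_of_tail_form_le u v mu :
  quart u = 1 -> quart v = 1 -> 0 < mu ->
  (forall z w a b, quart z = 1 -> bj_form u z = 0 -> quart w = 1 -> bj_form v w = 0 ->
     mu ^ 2 * tail_form v w a (b * mu) <= tail_form u z a b) ->
  CPP u v.
Proof.
  intros Hu Hv Hmu Hle.
  exists 1. split; [lra|]. exists mu. split; [lra|].
  intros z w a b Hz Sz Hw Sw _ Sp.
  apply birkhoff_iff in Hz, Hw. apply in_sphere_iff in Sz, Sw, Sp.
  apply norm4_le1_iff. rewrite quart_lincomb in Sp |- *.
  rewrite Hu, Hz in Sp. rewrite Hv, Hw.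
  specialize (Hle z w a b Sz Hz Sw Hw).
  assert (b ^ 2 * (mu ^ 2 * tail_form v w a (b * mu)) <= b ^ 2 * tail_form u z a b)
    by (apply Rmult_le_compat_l; [apply pow2_ge_0 | exact Hle]).
  replace ((b * mu) ^ 2 * tail_form v w a (b * mu))
    with (b ^ 2 * (mu ^ 2 * tail_form v w a (b * mu))) by ring.
  lra.
Qed.

Lemma CPP_on_axes u v :
  quart u = 1 -> quart v = 1 -> fst u * snd u = 0 -> fst v * snd v = 0 -> CPP u v.
Proof.
  intros Hu Hv Hu0 Hv0. apply (CPP_of_tail_form_le u v 1); [assumption | assumption | lra |].
  intros z w a b Sz Hz Sw Hw.
  rewrite !tail_form_on_axis, Sz, Sw by assumption.
  apply Req_le; ring.
Qed.

Lemma CPP_off_axis u v : quart u = 1 -> quart v = 1 -> fst u * snd u <> 0 -> CPP u v.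
Proof.
  intros Hu Hv Hu0. set (m := (fst u * snd u) ^ 2).
  assert (Hm : 0 < m) by (unfold m; simpl; rewrite Rmult_1_r; apply Rsqr_pos_lt, Hu0).
  apply (CPP_of_tail_form_le u v (m / 4)); [assumption | assumption | lra |].
  intros z w a b Sz Hz Sw Hw.
  assert (Hmz : m <= mixed_sq u z) by (apply axis_gap_le_mixed_sq; assumption).
  pose proof (mixed_sq_le_1 u z Hu Sz).
  assert (Hm1 : m <= 1) by lra.
  pose proof (tail_form_le v w a (b * (m / 4)) Hv Sw) as Hvle.
  pose proof (tail_form_ge u z a b Sz) as Huge.
  assert (m * a ^ 2 <= mixed_sq u z * a ^ 2)
    by (apply Rmult_le_compat_r; [apply pow2_ge_0 | exact Hmz]).
  pose proof (pow2_ge_0 a). pose proof (pow2_ge_0 b).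
  assert (Hmm : m * m <= m) by nra.
  assert (Hm4 : (m * m) * (m * m) <= 1) by nra.
  assert (m * m * a ^ 2 <= m * a ^ 2) by nra.
  assert (0 <= m * a ^ 2) by nra.
  assert ((m * m) * (m * m) * b ^ 2 <= b ^ 2) by nra.
  assert ((m / 4) ^ 2 * (8 * a ^ 2 + 3 * (b * (m / 4)) ^ 2) <= m * a ^ 2 + b ^ 2 / 5)
    by (replace ((m / 4) ^ 2 * (8 * a ^ 2 + 3 * (b * (m / 4)) ^ 2))
          with (m * m * a ^ 2 / 2 + 3 / 256 * ((m * m) * (m * m) * b ^ 2)) by field; lra).
  assert ((m / 4) ^ 2 * tail_form v w a (b * (m / 4))
          <= (m / 4) ^ 2 * (8 * a ^ 2 + 3 * (b * (m / 4)) ^ 2))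
    by (apply Rmult_le_compat_l; [apply pow2_ge_0 | exact Hvle]).
  lra.
Qed.

Lemma pow4_le_self t : 0 <= t <= 1 -> t ^ 4 <= t.
Proof.
  intro Ht. assert (t * t <= 1) by nra. assert (t * t * t <= 1) by nra.
  replace (t ^ 4) with (t * (t * t * t)) by ring. nra.
Qed.

Lemma unit_circle_near_axis e :
  0 < e -> exists a b, 0 < b <= e /\ b <= 1 / 2 /\ a ^ 4 + b ^ 4 = 1 /\
                       (a - 1) ^ 4 <= b ^ 4 /\ 1 / 2 <= a ^ 2.
Proof.
  intro He. set (b := Rmin e (1 / 2)).
  assert (Hb : 0 < b) by (apply Rmin_pos; lra).
  assert (Hbe : b <= e) by apply Rmin_l.
  assert (Hb2 : b <= 1 / 2) by apply Rmin_r.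
  assert (Hb4 : b ^ 4 <= b) by (apply pow4_le_self; lra).
  assert (Hb4' : 0 <= b ^ 4) by (apply pow_le; lra).
  set (a := sqrt (sqrt (1 - b ^ 4))).
  assert (Ha4 : a ^ 4 = 1 - b ^ 4) by (apply sqrt_sqrt_pow4; lra).
  assert (Ha0 : 0 <= a) by apply sqrt_pos.
  assert (Ha1 : a <= 1) by (apply (pow4_le_iff a 1); [lra | lra | rewrite pow1; lra]).
  assert (Haa : a ^ 4 <= a) by (apply pow4_le_self; lra).
  exists a, b. repeat split; try lra.
  - replace ((a - 1) ^ 4) with ((1 - a) ^ 4) by ring.
    apply pow_incr; lra.
  - assert (a ^ 4 <= a ^ 2) by (replace (a ^ 4) with (a ^ 2 * a ^ 2) by ring; nra).
    nra.
Qed.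

Lemma swap_orth_unit_on_axis u :
  quart u = 1 -> fst u * snd u = 0 ->
  quart (snd u, fst u) = 1 /\ bj_form u (snd u, fst u) = 0.
Proof.
  destruct u as [x y]; unfold quart, bj_form; cbn [fst snd]; intros Hu Hxy. split.
  - lra.
  - replace (x ^ 3 * y + y ^ 3 * x) with (x * y * (x ^ 2 + y ^ 2)) by ring.
    rewrite Hxy; ring.
Qed.

Lemma not_CPP_axis_off_axis u v :
  quart u = 1 -> quart v = 1 -> fst u * snd u = 0 -> fst v * snd v <> 0 -> ~ CPP u v.
Proof.
  intros Hu Hv Hu0 Hv0 [r [Hr [mu [Hmu Hcpp]]]].
  destruct (exists_orth_unit v Hv) as [w [Sw Hw]].
  set (z := (snd u, fst u)).
  destruct (swap_orth_unit_on_axis u Hu Hu0) as [Sz Hz]. fold z in Sz, Hz.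
  set (m := (fst v * snd v) ^ 2).
  assert (Hm : 0 < m) by (unfold m; simpl; rewrite Rmult_1_r; apply Rsqr_pos_lt, Hv0).
  assert (He : 0 < Rmin (r / 2) (mu ^ 2 * m / 4))
    by (apply Rmin_pos; [lra | pose proof (pow_lt mu 2 Hmu); nra]).
  destruct (unit_circle_near_axis _ He) as [a [b [[Hb Hbe] [Hb2 [Hab [Ha1 Ha2]]]]]].
  assert (Hquart_u : forall c, quart (vadd (vscal c u) (vscal b z)) = c ^ 4 + b ^ 4).
  { intro c. rewrite quart_lincomb, Hu, Hz, tail_form_on_axis, Sz by assumption. ring. }
  assert (Hle : norm4 (vadd (vscal a v) (vscal (b * mu) w)) <= 1).
  { apply (Hcpp z w a b); try (apply birkhoff_iff; assumption); try (apply in_sphere_iff; assumption).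
    - apply in_ball_iff; [assumption |].
      replace (vsub (vadd (vscal a u) (vscal b z)) u) with (vadd (vscal (a - 1) u) (vscal b z))
        by (unfold vsub, vadd, vscal; f_equal; cbn [fst snd]; ring).
      rewrite Hquart_u.
      assert (b <= r / 2) by (pose proof (Rmin_l (r / 2) (mu ^ 2 * m / 4)); lra).
      assert (b ^ 4 <= (r / 2) ^ 4) by (apply pow_incr; lra).
      assert (0 < r ^ 4) by (apply pow_lt; lra).
      replace ((r / 2) ^ 4) with (r ^ 4 / 16) in * by field. lra.
    - apply in_sphere_iff. rewrite Hquart_u. lra. }
  apply norm4_le1_iff in Hle. rewrite quart_lincomb, Hv, Hw in Hle.
  assert (Hgrow : b ^ 2 < mu ^ 2 * tail_form v w a (b * mu)).
  { pose proof (tail_form_ge v w a (b * mu) Sw).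
    assert (m * a ^ 2 <= mixed_sq v w * a ^ 2)
      by (apply Rmult_le_compat_r; [apply pow2_ge_0 | apply axis_gap_le_mixed_sq; assumption]).
    assert (b <= mu ^ 2 * m / 4) by (pose proof (Rmin_r (r / 2) (mu ^ 2 * m / 4)); lra).
    pose proof (pow2_ge_0 (b * mu)).
    assert (0 < mu ^ 2) by (apply pow_lt; lra).
    assert (b ^ 2 < mu ^ 2 * (m * a ^ 2)) by nra.
    nra. }
  assert (b ^ 2 * b ^ 2 < b ^ 2 * (mu ^ 2 * tail_form v w a (b * mu)))
    by (apply Rmult_lt_compat_l; [apply pow_lt |]; lra).
  replace ((b * mu) ^ 2 * tail_form v w a (b * mu))
    with (b ^ 2 * (mu ^ 2 * tail_form v w a (b * mu))) in Hle by ring.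
  replace (b ^ 2 * b ^ 2) with (b ^ 4) in * by ring.
  lra.
Qed.

Theorem mainTheorem11 (x y x1 y1 : R) :
  in_sphere (x, y) -> in_sphere (x1, y1) ->
  (~ CPP (x, y) (x1, y1) <-> (x * y = 0 /\ x1 * y1 <> 0)).
Proof.
  rewrite !in_sphere_iff. intros Hu Hv. split.
  - intro Hnot. destruct (Req_dec (x * y) 0) as [Hu0 | Hu0].
    + split; [assumption |]. intro Hv0. exact (Hnot (CPP_on_axes _ _ Hu Hv Hu0 Hv0)).
    + exfalso. exact (Hnot (CPP_off_axis _ _ Hu Hv Hu0)).
  - intros [Hu0 Hv0]. exact (not_CPP_axis_off_axis _ _ Hu Hv Hu0 Hv0).
Qed.
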